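(* (i) If for all real $t$ and $\epsilon$ one has $\operatorname{sign}\big(\mathcal{L}[\xi](t,\epsilon)\big)=\operatorname{sign}(\epsilon)$, then all zeros of the Riemann function $\xi(s)$ lie on the critical line $\Re s=1/2$. (ii) Let $\chi$ be a primitive Dirichlet character modulo $q$. If for all real $t$ and $\epsilon$ one has $\operatorname{sign}\big(\mathcal{L}[\xi(\cdot,\chi)](t,\epsilon)\big)=\operatorname{sign}(\epsilon)$, then all zeros of $\xi(s,\chi)$ lie on the critical line $\Re s=1/2$.
   Context: Write $s=\tfrac12+\epsilon+it$ with $\epsilon,t\in\mathbb{R}$. The Riemann xi function is $\xi(s)=\Gamma(\tfrac s2+1)(s-1)\pi^{-s/2}\zeta(s)$. For a primitive Dirichlet character $\chi$ modulo $q$, with $\alpha=0$ if $\chi(-1)=1$ and $\alpha=1$ if $\chi(-1)=-1$, set $\xi(s,\chi)=(q/\pi)^{(s+\alpha)/2}\Gamma(\tfrac{s+\alpha}{2})L(s,\chi)$, where $L(s,\chi)$ is the (analytically continued) Dirichlet $L$-function. For a function $f(s)$, viewed as a function of $(t,\epsilon)$, the angular momentum is $\mathcal{L}[f](t,\epsilon)=\Re f\,\partial_t\Im f-\Im f\,\partial_t\Re f$ (derivative in $t$ at fixed $\epsilon$). $\operatorname{sign}(0)=0$. *)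

From Stdlib Require Import Reals Arith.
From Coquelicot Require Import Coquelicot.
Open Scope R_scope.

Definition cexp (z : C) : C :=
  (exp (Re z) * cos (Im z), exp (Re z) * sin (Im z)).

Definition cpow_pos (a : R) (w : C) : C := cexp (Cmult w (RtoC (ln a))).

(* Gamma z = g, via Euler's integral  int_0^oo x^(z-1) e^(-x) dx  (Re z > 0) *)
Definition is_Gamma (z g : C) : Prop :=
  is_RInt_gen (fun x : R => Cmult (cpow_pos x (Cminus z (RtoC 1))) (RtoC (exp (- x))))
    (at_right 0) (Rbar_locally p_infty) g.

Definition entire (f : C -> C) : Prop := forall z : C, ex_derive f z.

(* Riemann xi(s) = Gamma(s/2+1) (s-1) pi^(-s/2) zeta(s): the (unique) entire
   function agreeing with this formula (zeta as its Dirichlet series) on Re s > 1. *)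
Definition is_riemann_xi (Xi : C -> C) : Prop :=
  entire Xi /\
  forall s : C, 1 < Re s ->
    exists G Z : C,
      is_Gamma (Cplus (Cdiv s (RtoC 2)) (RtoC 1)) G /\
      is_series (fun n : nat => cpow_pos (INR (S n)) (Copp s)) Z /\
      Xi s = Cmult (Cmult (Cmult G (Cminus s (RtoC 1)))
                          (cpow_pos PI (Copp (Cdiv s (RtoC 2))))) Z.

Definition dirichlet_character (q : nat) (chi : nat -> C) : Prop :=
  (forall n : nat, chi (n + q)%nat = chi n) /\
  (forall m n : nat, chi (m * n)%nat = Cmult (chi m) (chi n)) /\
  chi 1%nat = RtoC 1 /\
  (forall n : nat, chi n = RtoC 0 <-> Nat.gcd n q <> 1%nat).

(* primitive: not induced by a character of any proper divisor d of q *)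
Definition primitive_character (q : nat) (chi : nat -> C) : Prop :=
  dirichlet_character q chi /\
  forall d : nat, Nat.divide d q -> (d < q)%nat ->
    exists n : nat, Nat.gcd n q = 1%nat /\ n mod d = 1 mod d /\ chi n <> RtoC 1.

(* alpha = 0 if chi(-1) = 1, alpha = 1 if chi(-1) = -1  (chi(-1) = chi(q-1)) *)
Definition char_parity (q : nat) (chi : nat -> C) (alpha : R) : Prop :=
  (chi (q - 1)%nat = RtoC 1 /\ alpha = 0) \/ (chi (q - 1)%nat = RtoC (-1) /\ alpha = 1).

(* xi(s,chi) = (q/pi)^((s+alpha)/2) Gamma((s+alpha)/2) L(s,chi): the entire function
   agreeing with this formula (L as its Dirichlet series) on Re s > 1. *)
Definition is_dirichlet_xi (q : nat) (chi : nat -> C) (Xi : C -> C) : Prop :=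
  entire Xi /\
  forall s : C, 1 < Re s ->
    exists (alpha : R) (G Lv : C),
      char_parity q chi alpha /\
      is_Gamma (Cdiv (Cplus s (RtoC alpha)) (RtoC 2)) G /\
      is_series (fun n : nat => Cmult (chi (S n)) (cpow_pos (INR (S n)) (Copp s))) Lv /\
      Xi s = Cmult (Cmult (cpow_pos (INR q / PI) (Cdiv (Cplus s (RtoC alpha)) (RtoC 2))) G) Lv.

Definition spt (t eps : R) : C := (1/2 + eps, t).

Definition ang_mom (f : C -> C) (t eps : R) : R :=
  Re (f (spt t eps)) * Derive (fun u => Im (f (spt u eps))) t
  - Im (f (spt t eps)) * Derive (fun u => Re (f (spt u eps))) t.

Definition sgn (x : R) : R :=
  if Rlt_dec 0 x then 1 else if Rlt_dec x 0 then -1 else 0.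

(* At a zero of f both Re f and Im f vanish, so the angular momentum vanishes there
   whatever the t-derivatives are.  If sign L[f] = sign eps everywhere, a zero
   at 1/2 + eps + it therefore forces sign eps = 0, i.e. eps = 0.  No property of
   xi beyond the sign hypothesis is needed. *)
From Stdlib Require Import Reals Arith Lra.
From Coquelicot Require Import Coquelicot.
Open Scope R_scope.

Lemma sgn_0 : sgn 0 = 0.
Proof.
  unfold sgn.
  destruct (Rlt_dec 0 0); [lra|].
  destruct (Rlt_dec 0 0); [lra|reflexivity].
Qed.

Lemma sgn_eq0 (x : R) : sgn x = 0 -> x = 0.
Proof.
  unfold sgn.
  destruct (Rlt_dec 0 x); [lra|].
  destruct (Rlt_dec x 0); lra.
Qed.

Lemma spt_Re_Im (s : C) : spt (Im s) (Re s - 1/2) = s.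
Proof.
  destruct s as [a b].
  unfold spt; simpl; f_equal; lra.
Qed.

Lemma ang_mom_root (f : C -> C) (t eps : R) :
  f (spt t eps) = RtoC 0 -> ang_mom f t eps = 0.
Proof.
  intros Hroot.
  unfold ang_mom.
  rewrite Hroot; simpl.
  ring.
Qed.

Lemma root_on_critical_line_of_ang_mom_sgn (f : C -> C) :
  (forall t eps : R, sgn (ang_mom f t eps) = sgn eps) ->
  forall s : C, f s = RtoC 0 -> Re s = 1/2.
Proof.
  intros Hsgn s Hroot.
  rewrite <- (spt_Re_Im s) in Hroot.
  assert (Heps : sgn (Re s - 1/2) = 0).
  { rewrite <- (Hsgn (Im s)), (ang_mom_root f _ _ Hroot).
    exact sgn_0. }
  apply sgn_eq0 in Heps.
  lra.
Qed.

Theorem mainTheorem4 :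
  (forall Xi : C -> C, is_riemann_xi Xi ->
     (forall t eps : R, sgn (ang_mom Xi t eps) = sgn eps) ->
     forall s : C, Xi s = RtoC 0 -> Re s = 1/2)
  /\
  (forall (q : nat) (chi : nat -> C) (Xi : C -> C),
     (1 < q)%nat -> primitive_character q chi -> is_dirichlet_xi q chi Xi ->
     (forall t eps : R, sgn (ang_mom Xi t eps) = sgn eps) ->
     forall s : C, Xi s = RtoC 0 -> Re s = 1/2).
Proof.
  split.
  - intros Xi _. exact (root_on_critical_line_of_ang_mom_sgn Xi).
  - intros q chi Xi _ _ _. exact (root_on_critical_line_of_ang_mom_sgn Xi).
Qed.
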